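(* Let $T\in\mathcal{L}(\mathcal{H})$ be a contraction with $\dim\mathcal{D}_T=\dim\mathcal{D}_{T^*}=N<\infty$, and let $V\in\mathcal{L}(\mathcal{H}')$ be unitary; put $T_1=T\oplus V$ on $\mathcal{H}\oplus\mathcal{H}'$. Suppose that the map $\tau:\mathcal{U}_T\to\mathfrak{K}$, $\mathbf{U}\mapsto\overline{W(\mathbf{U})}$, wraps $\overline{W(T)}$, where $\mathcal{U}_T$ is the set of unitary $N$-dilations of $T$ to $\mathcal{H}\oplus\mathbb{C}^N$. Then the analogous map $\tau_1:\mathcal{U}_{T_1}\to\mathfrak{K}$, $\mathbf{U}\mapsto\overline{W(\mathbf{U})}$, wraps $\overline{W(T_1)}$, where $\mathcal{U}_{T_1}$ is the set of unitary $N$-dilations of $T_1$ to $\mathcal{H}\oplus\mathcal{H}'\oplus\mathbb{C}^N$.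
   Context: For a contraction $T$, $\mathcal{D}_T=\overline{\operatorname{ran}(I-T^*T)^{1/2}}$ and $\mathcal{D}_{T^*}=\overline{\operatorname{ran}(I-TT^* )^{1/2}}$. A unitary $N$-dilation of $T\in\mathcal{L}(\mathcal{H})$ to $\mathcal{H}\oplus\mathbb{C}^N$ is a unitary $\mathbf{U}$ on $\mathcal{H}\oplus\mathbb{C}^N$ with $P_{\mathcal{H}}\mathbf{U}|_{\mathcal{H}}=T$. $W$ denotes numerical range. $\mathfrak{K}$ is the space of nonempty compact subsets of $\mathbb{C}$ with the Hausdorff distance; a map $\tau$ from a set $Y$ to $\mathfrak{K}$ wraps $A\in\mathfrak{K}$ if for every open half-plane $\mathbb{H}$ containing $A$ there exists $y\in Y$ with $\tau(y)\subset\mathbb{H}$. *)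

From Stdlib Require Import Reals.
From mathcomp Require Import all_boot.

Set Implicit Arguments.
Unset Strict Implicit.
Unset Printing Implicit Defensive.

Local Open Scope R_scope.

Definition C : Type := (R * R)%type.
Definition Cre (z : C) : R := fst z.
Definition Cim (z : C) : R := snd z.
Definition C0 : C := (0, 0).
Definition C1 : C := (1, 0).
Definition Cadd (z w : C) : C := (fst z + fst w, snd z + snd w).
Definition Copp (z : C) : C := (- fst z, - snd z).
Definition Cmul (z w : C) : C :=
  (fst z * fst w - snd z * snd w, fst z * snd w + snd z * fst w).
Definition Cconj (z : C) : C := (fst z, - snd z).
Definition Cmod (z : C) : R := sqrt (fst z * fst z + snd z * snd z).
Definition Cdist (z w : C) : R := Cmod (Cadd z (Copp w)).

(* inner product linear in the first argument, conjugate-linear in the second *)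
Record IPS := {
  car :> Type;
  vzero : car;
  vadd : car -> car -> car;
  vopp : car -> car;
  vscal : C -> car -> car;
  ip : car -> car -> C
}.

Arguments vzero {_}.
Arguments vadd {_}.
Arguments vopp {_}.
Arguments vscal {_}.
Arguments ip {_}.

Definition vnorm {X : IPS} (x : X) : R := sqrt (fst (ip x x)).
Definition vsub {X : IPS} (x y : X) : X := vadd x (vopp y).

Definition Cauchy_seq {X : IPS} (u : nat -> X) : Prop :=
  forall eps, 0 < eps -> exists M : nat, forall m n : nat,
    (M <= m)%nat -> (M <= n)%nat -> vnorm (vsub (u m) (u n)) < eps.

Definition converges_to {X : IPS} (u : nat -> X) (l : X) : Prop :=
  forall eps, 0 < eps -> exists M : nat, forall n : nat,
    (M <= n)%nat -> vnorm (vsub (u n) l) < eps.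

Definition is_hilbert (X : IPS) : Prop :=
  (forall x y z : X, vadd x (vadd y z) = vadd (vadd x y) z) /\
  (forall x y : X, vadd x y = vadd y x) /\
  (forall x : X, vadd x vzero = x) /\
  (forall x : X, vadd x (vopp x) = vzero) /\
  (forall x : X, vscal C1 x = x) /\
  (forall (a b : C) (x : X), vscal a (vscal b x) = vscal (Cmul a b) x) /\
  (forall (a : C) (x y : X), vscal a (vadd x y) = vadd (vscal a x) (vscal a y)) /\
  (forall (a b : C) (x : X), vscal (Cadd a b) x = vadd (vscal a x) (vscal b x)) /\
  (forall x y z : X, ip (vadd x y) z = Cadd (ip x z) (ip y z)) /\
  (forall (a : C) (x y : X), ip (vscal a x) y = Cmul a (ip x y)) /\
  (forall x y : X, ip y x = Cconj (ip x y)) /\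
  (forall x : X, 0 <= fst (ip x x)) /\
  (forall x : X, ip x x = C0 -> x = vzero) /\
  (forall u : nat -> X, Cauchy_seq u -> exists l, converges_to u l).

Definition prodIPS (X Y : IPS) : IPS := {|
  car := (X * Y)%type;
  vzero := (vzero, vzero);
  vadd := fun p q => (vadd p.1 q.1, vadd p.2 q.2);
  vopp := fun p => (vopp p.1, vopp p.2);
  vscal := fun a p => (vscal a p.1, vscal a p.2);
  ip := fun p q => Cadd (ip p.1 q.1) (ip p.2 q.2)
|}.

Definition CN (N : nat) : IPS := {|
  car := 'I_N -> C;
  vzero := fun _ => C0;
  vadd := fun v w i => Cadd (v i) (w i);
  vopp := fun v i => Copp (v i);
  vscal := fun a v i => Cmul a (v i);
  ip := fun v w => \big[Cadd/C0]_(i < N) Cmul (v i) (Cconj (w i))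
|}.

Definition is_linear {X : IPS} (A : X -> X) : Prop :=
  forall (a : C) (x y : X), A (vadd (vscal a x) y) = vadd (vscal a (A x)) (A y).

Definition bounded_linear {X : IPS} (A : X -> X) : Prop :=
  is_linear A /\ exists K : R, forall x : X, vnorm (A x) <= K * vnorm x.

Definition is_adjoint {X : IPS} (A B : X -> X) : Prop :=
  forall x y : X, ip (A x) y = ip x (B y).

Definition contraction {X : IPS} (A : X -> X) : Prop :=
  bounded_linear A /\ forall x : X, vnorm (A x) <= vnorm x.

Definition unitary {X : IPS} (U : X -> X) : Prop :=
  bounded_linear U /\ exists Us : X -> X,
    is_adjoint U Us /\ (forall x, U (Us x) = x) /\ (forall x, Us (U x) = x).

Definition is_pos_sqrt {X : IPS} (A S : X -> X) : Prop :=
  bounded_linear S /\ is_adjoint S S /\ (forall x, 0 <= fst (ip (S x) x)) /\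
  (forall x, S (S x) = A x).

Definition closure_range {X : IPS} (S : X -> X) : X -> Prop :=
  fun y => forall eps, 0 < eps -> exists x, vnorm (vsub (S x) y) < eps.

Definition has_dim {X : IPS} (M : X -> Prop) (N : nat) : Prop :=
  exists e : 'I_N -> X,
    (forall i j, ip (e i) (e j) = if i == j then C1 else C0) /\
    (forall y, M y <-> exists c : 'I_N -> C,
         y = \big[vadd/vzero]_(i < N) vscal (c i) (e i)).

(* dim D_A = N, where D_A = closure of ran (I - As A)^{1/2}, As the adjoint of A *)
Definition defect_dim {X : IPS} (A As : X -> X) (N : nat) : Prop :=
  exists S : X -> X, is_pos_sqrt (fun x => vsub x (As (A x))) S /\
    has_dim (closure_range S) N.

Definition numrange {X : IPS} (A : X -> X) : C -> Prop :=
  fun z => exists x : X, vnorm x = 1 /\ z = ip (A x) x.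

Definition Cclosure (K : C -> Prop) : C -> Prop :=
  fun z => forall eps, 0 < eps -> exists w, K w /\ Cdist z w < eps.

Definition half_plane (a b c : R) : C -> Prop :=
  fun z => a * Cre z + b * Cim z < c.

Definition wraps {Y : Type} (P : Y -> Prop) (tau : Y -> C -> Prop) (A : C -> Prop) : Prop :=
  forall a b c : R, (a, b) <> (0, 0) ->
    (forall z, A z -> half_plane a b c z) ->
    exists y, P y /\ forall z, tau y z -> half_plane a b c z.

Definition unitary_dilation {X : IPS} (N : nat) (T : X -> X)
  (U : prodIPS X (CN N) -> prodIPS X (CN N)) : Prop :=
  unitary U /\ forall x : X, (U (x, vzero)).1 = T x.

Definition opsum {X Y : IPS} (A : X -> X) (B : Y -> Y) : prodIPS X Y -> prodIPS X Y :=
  fun p => (A p.1, B p.2).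

Arguments unitary_dilation {X} N T U.
Arguments wraps {Y} P tau A.

(* The closed numerical range of T (+) V is compact, so inside the open
   half-plane [a x + b y < c] it satisfies [a x + b y <= c - m] for some m > 0.
   It contains W(T) and W(V); wrapping applied to the half-plane with c - m/2
   yields a unitary dilation U of T whose numerical range lies in it.  Letting U
   act on H (+) C^N and V on H' gives a unitary N-dilation of T (+) V whose
   quadratic form is the sum of those of U and V, so its numerical range, and
   hence its closure, stays in [a x + b y <= c - m/2]. *)

From Pilot Require Import Defs.
From Stdlib Require Import Reals Lra Psatz Classical ClassicalEpsilon.
From mathcomp Require Import all_boot.
Local Open Scope R_scope.

Ltac cunfold :=
  unfold half_plane, Cadd, Cmul, Cconj, Copp, C0, C1, Cre, Cim in *; cbv beta in *.
Ltac ceq := cunfold; apply injective_projections; simpl; ring.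

(* The inner-product laws alone; unlike [is_hilbert] they are inherited by
   [prodIPS] and [CN] without any vector-space or completeness axioms. *)
Definition ip_axioms (X : IPS) : Prop :=
  (forall x y z : X, ip (vadd x y) z = Cadd (ip x z) (ip y z)) /\
  (forall a (x y : X), ip (vscal a x) y = Cmul a (ip x y)) /\
  (forall x y : X, ip y x = Cconj (ip x y)) /\
  (forall x : X, 0 <= fst (ip x x)) /\
  (forall z : X, ip vzero z = C0).

Lemma hilbert_ip_axioms {X : IPS} : is_hilbert X -> ip_axioms X.
Proof.
move=> [_ [_ [addx0 [_ [_ [_ [_ [_ [ipD [ipZ [ipC [ipge0 _]]]]]]]]]]]].
do 4 (split=> //); move=> z.
have := ipD vzero vzero z; rewrite addx0.
case: (ip vzero z) => p q; cunfold; case=> h1 h2.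
apply: injective_projections => /=; lra.
Qed.

Lemma big_Cadd_split (I : Type) (r : seq I) (F G : I -> Defs.C) :
  \big[Cadd/C0]_(i <- r) Cadd (F i) (G i) =
  Cadd (\big[Cadd/C0]_(i <- r) F i) (\big[Cadd/C0]_(i <- r) G i).
Proof. elim: r => [|i r IH]; rewrite ?big_nil ?big_cons ?IH; ceq. Qed.

Lemma big_Cmul_l (I : Type) (r : seq I) a (F : I -> Defs.C) :
  \big[Cadd/C0]_(i <- r) Cmul a (F i) = Cmul a (\big[Cadd/C0]_(i <- r) F i).
Proof. elim: r => [|i r IH]; rewrite ?big_nil ?big_cons ?IH; ceq. Qed.

Lemma big_Cconj (I : Type) (r : seq I) (F : I -> Defs.C) :
  \big[Cadd/C0]_(i <- r) Cconj (F i) = Cconj (\big[Cadd/C0]_(i <- r) F i).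
Proof. elim: r => [|i r IH]; rewrite ?big_nil ?big_cons ?IH; ceq. Qed.

Lemma big_Cre_ge0 (I : Type) (r : seq I) (F : I -> Defs.C) :
  (forall i, 0 <= fst (F i)) -> 0 <= fst (\big[Cadd/C0]_(i <- r) F i).
Proof.
move=> F_ge0; elim: r => [|i r IH]; rewrite ?big_nil ?big_cons /=; first lra.
have := F_ge0 i; lra.
Qed.

Lemma big_C0 (I : Type) (r : seq I) (F : I -> Defs.C) :
  (forall i, F i = C0) -> \big[Cadd/C0]_(i <- r) F i = C0.
Proof. move=> F0; elim: r => [|i r IH]; rewrite ?big_nil ?big_cons ?IH ?F0; ceq. Qed.

Lemma CN_ip_axioms N : ip_axioms (CN N).
Proof.
split; [|split; [|split; [|split]]].
- move=> x y z /=; rewrite -big_Cadd_split; apply: eq_bigr => i _; ceq.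
- move=> a x y /=; rewrite -big_Cmul_l; apply: eq_bigr => i _; ceq.
- move=> x y /=; rewrite -big_Cconj; apply: eq_bigr => i _; ceq.
- move=> x /=; apply: big_Cre_ge0 => i; cunfold; simpl; nra.
- move=> z /=; apply: big_C0 => i; ceq.
Qed.

Lemma prodIPS_ip_axioms {X Y : IPS} : ip_axioms X -> ip_axioms Y -> ip_axioms (prodIPS X Y).
Proof.
move=> [D1 [Z1 [C1 [P1 O1]]]] [D2 [Z2 [C2 [P2 O2]]]].
split; [|split; [|split; [|split]]].
- move=> x y z /=; rewrite D1 D2; ceq.
- move=> a x y /=; rewrite Z1 Z2; ceq.
- move=> x y /=; rewrite C1 C2; ceq.
- move=> x /=; have := P1 x.1; have := P2 x.2; cunfold; simpl; lra.
- move=> z /=; rewrite O1 O2; ceq.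
Qed.

Section InnerProduct.
Context {X : IPS} (hX : ip_axioms X).

Lemma ipDl (x y z : X) : ip (vadd x y) z = Cadd (ip x z) (ip y z).
Proof. by case: hX. Qed.
Lemma ipZl a (x y : X) : ip (vscal a x) y = Cmul a (ip x y).
Proof. by case: hX => _ []. Qed.
Lemma ip_conj (x y : X) : ip y x = Cconj (ip x y).
Proof. by case: hX => _ [] _ []. Qed.
Lemma ip_ge0 (x : X) : 0 <= fst (ip x x).
Proof. by case: hX => _ [] _ [] _ []. Qed.
Lemma ip0l (z : X) : ip vzero z = C0.
Proof. by case: hX => _ [] _ [] _ []. Qed.

Lemma ipDr (x y z : X) : ip z (vadd x y) = Cadd (ip z x) (ip z y).
Proof. rewrite ip_conj ipDl (ip_conj x z) (ip_conj y z); ceq. Qed.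
Lemma ipZr a (x z : X) : ip z (vscal a x) = Cmul (Cconj a) (ip z x).
Proof. rewrite ip_conj ipZl (ip_conj x z); ceq. Qed.
Lemma ip0r (z : X) : ip z vzero = C0.
Proof. rewrite ip_conj ip0l; ceq. Qed.

Lemma vnorm1_ip (p : X) : vnorm p = 1 -> fst (ip p p) = 1.
Proof. rewrite /vnorm => p1; have := sqrt_sqrt _ (ip_ge0 p); rewrite p1; lra. Qed.

Lemma Re_ip_addZ (u v : X) (l : R) :
  fst (ip (vadd u (vscal (l, 0) v)) (vadd u (vscal (l, 0) v))) =
  fst (ip u u) + 2 * l * fst (ip u v) + l ^ 2 * fst (ip v v).
Proof. rewrite ipDl !ipDr !ipZl !ipZr (ip_conj u v); cunfold; simpl; ring. Qed.

(* Cauchy-Schwarz for the real part: the quadratic [l |-> |u + l v|^2] is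
   nonnegative, so its discriminant is not positive. *)
Lemma Re_ip_sqr_le (u v : X) : fst (ip u v) ^ 2 <= fst (ip u u) * fst (ip v v).
Proof.
have quad_ge0 l :
    0 <= fst (ip u u) + 2 * l * fst (ip u v) + l ^ 2 * fst (ip v v).
  by rewrite -Re_ip_addZ; apply: ip_ge0.
have uu_ge0 := ip_ge0 u; have vv_ge0 := ip_ge0 v.
move: quad_ge0 uu_ge0 vv_ge0.
set A := fst (ip u u); set B := fst (ip v v); set Q := fst (ip u v).
move=> quad_ge0 A_ge0 B_ge0.
have [B_gt0|B0] : 0 < B \/ B = 0 by lra.
- have := quad_ge0 (- Q / B).
  have -> : A + 2 * (- Q / B) * Q + (- Q / B) ^ 2 * B = (A * B - Q ^ 2) / B
    by field; lra.
  move=> h; have := Rmult_le_compat_r B _ _ (Rlt_le _ _ B_gt0) h.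
  have -> : (A * B - Q ^ 2) / B * B = A * B - Q ^ 2 by field; lra.
  lra.
- have [Q0|Q_neq0] := Req_dec Q 0; first by rewrite Q0 B0; lra.
  have := quad_ge0 (- (A + 1) / (2 * Q)); rewrite B0.
  have -> : A + 2 * (- (A + 1) / (2 * Q)) * Q + (- (A + 1) / (2 * Q)) ^ 2 * 0 = -1
    by field.
  lra.
Qed.

Definition Ci : Defs.C := (0, 1).

Lemma Im_ip (u v : X) : snd (ip u v) = fst (ip u (vscal Ci v)).
Proof. rewrite ipZr; cunfold; rewrite /Ci /=; ring. Qed.

Lemma Re_ip_scaleCi (v : X) : fst (ip (vscal Ci v) (vscal Ci v)) = fst (ip v v).
Proof. rewrite ipZl ipZr; cunfold; rewrite /Ci /=; ring. Qed.

Lemma ip_contraction_bound (A : X -> X) (x : X) :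
  fst (ip (A x) (A x)) <= fst (ip x x) ->
  Rabs (fst (ip (A x) x)) <= fst (ip x x) /\ Rabs (snd (ip (A x) x)) <= fst (ip x x).
Proof.
move=> Ax_le.
have CS_re := Re_ip_sqr_le (A x) x.
have CS_im := Re_ip_sqr_le (A x) (vscal Ci x); rewrite Re_ip_scaleCi -Im_ip in CS_im.
have := ip_ge0 (A x); have := ip_ge0 x => *.
by split; apply: Rabs_le; split; nra.
Qed.

End InnerProduct.

Lemma Cclosure_self {K : Defs.C -> Prop} {z} : K z -> Cclosure K z.
Proof.
move=> Kz eps eps_gt0; exists z; split=> //; rewrite /Cdist /Cmod; cunfold; simpl.
have -> : (fst z + - fst z) * (fst z + - fst z) + (snd z + - snd z) * (snd z + - snd z) = 0
  by ring.
by rewrite sqrt_0.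
Qed.

Lemma Cdist_lt_Rabs (z w : Defs.C) e :
  Cdist z w < e -> Rabs (fst z - fst w) < e /\ Rabs (snd z - snd w) < e.
Proof.
rewrite /Cdist /Cmod; cunfold; simpl=> zw.
rewrite -[Rabs (fst z - fst w)]sqrt_Rsqr_abs -[Rabs (snd z - snd w)]sqrt_Rsqr_abs.
have := Rle_0_sqr (fst z - fst w); have := Rle_0_sqr (snd z - snd w).
by rewrite /Rsqr /Rminus => *; split; apply: (Rle_lt_trans _ _ _ _ zw);
  apply: sqrt_le_1_alt; lra.
Qed.

(* [(x, y) |-> (a x + b y, - b x + a y)] is a rotation scaled by [sqrt (a^2 + b^2)]. *)
Lemma Cdist_lt_rotated a b (z w : Defs.C) e :
  0 < e -> 0 < a ^ 2 + b ^ 2 ->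
  (a * (fst z - fst w) + b * (snd z - snd w)) ^ 2 +
    (- b * (fst z - fst w) + a * (snd z - snd w)) ^ 2 < e ^ 2 * (a ^ 2 + b ^ 2) ->
  Cdist z w < e.
Proof.
move=> e_gt0 D_gt0 rot_lt; rewrite /Cdist /Cmod; cunfold.
have sum_lt : (fst z - fst w) ^ 2 + (snd z - snd w) ^ 2 < e ^ 2.
  apply: (Rmult_lt_reg_r (a ^ 2 + b ^ 2)) => //.
  by apply: (Rle_lt_trans _ _ _ _ rot_lt); right; ring.
rewrite -(sqrt_pow2 e); last lra.
apply: sqrt_lt_1_alt; rewrite /Rminus /= in sum_lt *; split; last lra.
by apply: Rplus_le_le_0_compat; apply: Rle_0_sqr.
Qed.

Lemma Cclosure_le {a b r : R} {K : Defs.C -> Prop} {z} :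
  (forall w, K w -> a * fst w + b * snd w <= r) -> Cclosure K z ->
  a * fst z + b * snd z <= r.
Proof.
move=> K_le z_cl; apply: Rnot_lt_le => z_gt.
set g := a * fst z + b * snd z - r.
have M_gt0 : 0 < Rabs a + Rabs b + 1 by have := Rabs_pos a; have := Rabs_pos b; lra.
have e_gt0 : 0 < g / (Rabs a + Rabs b + 1) by apply: Rdiv_lt_0_compat; rewrite /g; lra.
have [w [Kw /Cdist_lt_Rabs [dx dy]]] := z_cl _ e_gt0.
set e := g / (Rabs a + Rabs b + 1) in e_gt0 dx dy.
have e_eq : e * (Rabs a + Rabs b + 1) = g by rewrite /e; field; lra.
have adx : Rabs (a * (fst z - fst w)) <= Rabs a * e.
  by rewrite Rabs_mult; apply: Rmult_le_compat_l; [apply: Rabs_pos | lra].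
have bdy : Rabs (b * (snd z - snd w)) <= Rabs b * e.
  by rewrite Rabs_mult; apply: Rmult_le_compat_l; [apply: Rabs_pos | lra].
have := K_le w Kw; have := Rabs_triang (a * (fst z - fst w)) (b * (snd z - snd w)).
have := Rle_abs (a * (fst z - fst w) + b * (snd z - snd w)).
rewrite /g in e_eq; nra.
Qed.

(* The witness is the point of the line [a x + b y = c] whose coordinate
   [- b x + a y] along it is the cluster value [l]. *)
Lemma Cclosure_line_point (K : Defs.C -> Prop) a b c l (w : nat -> Defs.C) :
  0 < a ^ 2 + b ^ 2 -> (forall n, K (w n)) ->
  (forall n, c - / (INR n + 1) < a * fst (w n) + b * snd (w n) < c) ->
  ValAdh (fun n => - b * fst (w n) + a * snd (w n)) l ->
  Cclosure K ((a * c - b * l) / (a ^ 2 + b ^ 2), (b * c + a * l) / (a ^ 2 + b ^ 2)).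
Proof.
move=> D_gt0 Kw w_near l_adh eps eps_gt0.
set D := a ^ 2 + b ^ 2 in D_gt0 *.
set d := Rmin 1 (eps ^ 2 * D / 4).
have d_gt0 : 0 < d by apply: Rmin_pos; [lra | have := pow_lt _ 2 eps_gt0; nra].
have d_le1 : d <= 1 := Rmin_l _ _.
have d_le : d <= eps ^ 2 * D / 4 := Rmin_r _ _.
have [n n_large] := INR_archimed d 1 d_gt0.
have [p [np /Rabs_def2 [p_adh1 p_adh2]]] :=
  l_adh (disc l (mkposreal d d_gt0)) n (ex_intro _ (mkposreal d d_gt0) (fun x hx => hx)).
exists (w p); split=> //; apply: (Cdist_lt_rotated a b) => //.
have inv_p_lt : / (INR p + 1) < d.
  have n_le_p : INR n <= INR p by apply: le_INR.
  apply: (Rle_lt_trans _ (/ (INR n + 1))).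
    by apply: Rinv_le_contravar; have := pos_INR n; lra.
  apply: (Rmult_lt_reg_r (INR n + 1)); first by have := pos_INR n; lra.
  by rewrite Rinv_l; [nra | have := pos_INR n; lra].
have [wp1 wp2] := w_near p.
cbn [fst snd]; rewrite -/D.
have -> : a * ((a * c - b * l) / D - fst (w p)) + b * ((b * c + a * l) / D - snd (w p)) =
          c - (a * fst (w p) + b * snd (w p)) by rewrite /D; field; rewrite -/D; lra.
have -> : - b * ((a * c - b * l) / D - fst (w p)) + a * ((b * c + a * l) / D - snd (w p)) =
          l - (- b * fst (w p) + a * snd (w p)) by rewrite /D; field; rewrite -/D; lra.
simpl in p_adh1, p_adh2; nra.
Qed.

(* Otherwise points of [K] approach the boundary line; by Bolzano-Weierstrass
   their coordinate along the line clusters, giving a point of the line in the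
   closure of [K]. *)
Lemma half_plane_margin {a b c B : R} {K : Defs.C -> Prop} : (a, b) <> (0, 0) ->
  (forall z, K z -> Rabs (fst z) <= B /\ Rabs (snd z) <= B) ->
  (forall z, Cclosure K z -> half_plane a b c z) ->
  exists m, 0 < m /\ forall z, K z -> a * fst z + b * snd z <= c - m.
Proof.
move=> ab_neq0 K_bounded K_cl.
apply: NNPP => no_margin.
have D_gt0 : 0 < a ^ 2 + b ^ 2.
  have [a0|] := Req_dec a 0; last nra.
  have [b0|] := Req_dec b 0; last nra.
  by case: ab_neq0; rewrite a0 b0.
have near n : exists z, K z /\ c - / (INR n + 1) < a * fst z + b * snd z.
  apply: NNPP => far; apply: no_margin; exists (/ (INR n + 1)); split.
    by apply: Rinv_0_lt_compat; have := pos_INR n; lra.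
  by move=> z Kz; apply: Rnot_lt_le => z_gt; apply: far; exists z.
have [w w_near] : exists w : nat -> Defs.C,
    forall n, K (w n) /\ c - / (INR n + 1) < a * fst (w n) + b * snd (w n).
  by exists (fun n => proj1_sig (constructive_indefinite_description _ (near n)))
     => n; exact: proj2_sig (constructive_indefinite_description _ (near n)).
set M := (Rabs a + Rabs b) * B.
have coord_bounded n : - M <= - b * fst (w n) + a * snd (w n) <= M.
  have [x_le y_le] := K_bounded _ (proj1 (w_near n)).
  suff : Rabs (- b * fst (w n) + a * snd (w n)) <= M by split_Rabs; lra.
  apply: (Rle_trans _ _ _ (Rabs_triang _ _)).
  rewrite !Rabs_mult Rabs_Ropp /M Rmult_plus_distr_r Rplus_comm.
  by apply: Rplus_le_compat; apply: Rmult_le_compat_l; auto using Rabs_pos.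
have [l l_adh] := Bolzano_Weierstrass _ _ (compact_P3 (- M) M) coord_bounded.
have w_below n : c - / (INR n + 1) < a * fst (w n) + b * snd (w n) < c.
  have [Kwn wn_gt] := w_near n; split=> //.
  by have := K_cl _ (Cclosure_self Kwn); cunfold.
have := K_cl _ (Cclosure_line_point _ _ _ _ _ _ D_gt0 (fun n => proj1 (w_near n))
  w_below l_adh).
cunfold; rewrite /=.
have -> : a * ((a * c - b * l) / (a ^ 2 + b ^ 2)) + b * ((b * c + a * l) / (a ^ 2 + b ^ 2)) = c
  by field; lra.
lra.
Qed.

Lemma isometry_ip {X : IPS} {U Us : X -> X} :
  is_adjoint U Us -> (forall x, Us (U x) = x) -> forall x, ip (U x) (U x) = ip x x.
Proof. by move=> U_adj UsK x; rewrite U_adj UsK. Qed.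

Section NumericalRange.
Context {X : IPS} (hX : ip_axioms X).

(* Apply the hypothesis to [q] normalized.  The adjoint only serves to show that
   [A vzero] is orthogonal to everything, [ip_axioms] having no vector-space laws. *)
Lemma numrange_half_plane_quad {A As : X -> X} {a b r : R} :
  is_linear A -> is_adjoint A As ->
  (forall z, numrange A z -> a * fst z + b * snd z < r) ->
  forall q, a * fst (ip (A q) q) + b * snd (ip (A q) q) <= r * fst (ip q q).
Proof.
move=> A_lin A_adj A_W q.
have [qq0|qq_gt0] : fst (ip q q) = 0 \/ 0 < fst (ip q q) by have := ip_ge0 hX q; lra.
- have CS_re := Re_ip_sqr_le hX (A q) q.
  have CS_im := Re_ip_sqr_le hX (A q) (vscal Ci q).
  rewrite Re_ip_scaleCi // -Im_ip // qq0 Rmult_0_r in CS_im.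
  rewrite qq0 Rmult_0_r in CS_re.
  have -> : fst (ip (A q) q) = 0.
    by apply: Rle_antisym; nra.
  have -> : snd (ip (A q) q) = 0.
    by apply: Rle_antisym; nra.
  rewrite qq0; lra.
- set t := fst (ip q q) in qq_gt0 *.
  set l := / sqrt t.
  have l2t : l ^ 2 * t = 1.
    have sqrt_gt0 : 0 < sqrt t by apply: sqrt_lt_R0.
    rewrite /l -{2}(sqrt_sqrt t); [field | ]; lra.
  set q1 := vadd (vscal (l, 0) q) vzero.
  have A0_orth w : ip (A vzero) w = C0 by rewrite A_adj ip0l.
  have A_q1 : ip (A q1) q1 = Cmul (l ^ 2, 0) (ip (A q) q).
    rewrite /q1 A_lin ipDl // ipZl // A0_orth !ipDr // ipZr // !ip0r //; ceq.
  have q1_q1 : ip q1 q1 = Cmul (l ^ 2, 0) (ip q q).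
    rewrite /q1 ipDl // ipZl // ip0l // !ipDr // ipZr // !ip0r //; ceq.
  have q1_unit : vnorm q1 = 1.
    rewrite /vnorm q1_q1; cunfold; cbn [fst snd]; rewrite -/t.
    have -> : l ^ 2 * t - 0 * snd (ip q q) = 1 by rewrite l2t; ring.
    exact: sqrt_1.
  have := A_W _ (ex_intro _ q1 (conj q1_unit (erefl _))).
  rewrite A_q1; cunfold; cbn [fst snd] => W_q1.
  have l2_gt0 : 0 < l ^ 2 by apply: pow_lt; apply: Rinv_0_lt_compat; apply: sqrt_lt_R0.
  apply: (Rmult_le_reg_l (l ^ 2)) => //.
  have -> : l ^ 2 * (r * t) = r * (l ^ 2 * t) by ring.
  rewrite l2t; lra.
Qed.

Lemma numrange_contraction_bounded {A : X -> X} :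
  (forall x, fst (ip (A x) (A x)) <= fst (ip x x)) ->
  forall z, numrange A z -> Rabs (fst z) <= 1 /\ Rabs (snd z) <= 1.
Proof.
move=> A_contr z [x [x_unit ->]]; rewrite -(vnorm1_ip hX _ x_unit).
exact: ip_contraction_bound.
Qed.

End NumericalRange.

Lemma unitary_contraction {X : IPS} {V : X -> X} : unitary V -> contraction V.
Proof.
move=> [V_bl [Vs [V_adj [_ VsV]]]]; split=> // x.
by rewrite /vnorm (isometry_ip V_adj VsV); right.
Qed.

Lemma contraction_Re_ip_le {X : IPS} (hX : ip_axioms X) {A : X -> X} :
  contraction A -> forall x, fst (ip (A x) (A x)) <= fst (ip x x).
Proof. by move=> [_ A_le] x; apply: sqrt_le_0; [apply: ip_ge0 .. | apply: A_le]. Qed.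

Section OrthogonalSum.
Context {X Y : IPS}.
Hypotheses (hX : ip_axioms X) (hY : ip_axioms Y).

Lemma numrange_opsum_l {A : X -> X} {B : Y -> Y} {z} :
  numrange A z -> numrange (opsum A B) z.
Proof.
move=> [x [x_unit ->]]; exists (x, vzero); split.
  by rewrite -x_unit /vnorm /= ip0l //; cunfold; rewrite /= Rplus_0_r.
by rewrite /opsum /= ip0r //; ceq.
Qed.

Lemma numrange_opsum_r {A : X -> X} {B : Y -> Y} {z} :
  numrange B z -> numrange (opsum A B) z.
Proof.
move=> [y [y_unit ->]]; exists (vzero, y); split.
  by rewrite -y_unit /vnorm /= ip0l //; cunfold; rewrite /= Rplus_0_l.
by rewrite /opsum /= ip0r //; ceq.
Qed.

Lemma opsum_Re_ip_le {A : X -> X} {B : Y -> Y} :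
  (forall x, fst (ip (A x) (A x)) <= fst (ip x x)) ->
  (forall y, fst (ip (B y) (B y)) <= fst (ip y y)) ->
  forall p, fst (ip (opsum A B p) (opsum A B p)) <= fst (ip p p).
Proof. by move=> A_le B_le p; have := A_le p.1; have := B_le p.2; cunfold => /=; lra. Qed.

End OrthogonalSum.

Definition proj13 {X Y Z : IPS} (p : prodIPS (prodIPS X Y) Z) : prodIPS X Z :=
  (p.1.1, p.2).

Definition dilation_sum {X Y Z : IPS} (U : prodIPS X Z -> prodIPS X Z) (V : Y -> Y) :
    prodIPS (prodIPS X Y) Z -> prodIPS (prodIPS X Y) Z :=
  fun p => (((U (proj13 p)).1, V p.1.2), (U (proj13 p)).2).

Section DilationSum.
Context {X Y Z : IPS}.
Implicit Types (U : prodIPS X Z -> prodIPS X Z) (V : Y -> Y).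

Lemma ip_dilation_sum U V (p q : prodIPS (prodIPS X Y) Z) :
  ip (dilation_sum U V p) q = Cadd (ip (U (proj13 p)) (proj13 q)) (ip (V p.1.2) q.1.2).
Proof. ceq. Qed.

Lemma proj13_dilation_sum U V (p : prodIPS (prodIPS X Y) Z) :
  proj13 (dilation_sum U V p) = U (proj13 p).
Proof. by rewrite /proj13 /= -surjective_pairing. Qed.

Lemma ip_prod3 (p q : prodIPS (prodIPS X Y) Z) :
  ip p q = Cadd (ip (proj13 p) (proj13 q)) (ip p.1.2 q.1.2).
Proof. ceq. Qed.

Lemma dilation_sum_unitary U V : unitary U -> unitary V -> unitary (dilation_sum U V).
Proof.
move=> [[U_lin _] [Us [U_adj [UUs UsU]]]] [[V_lin _] [Vs [V_adj [VVs VsV]]]].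
split; first split.
- move=> a [[x y] v] [[x' y'] v']; rewrite /dilation_sum /=.
  by rewrite (U_lin a (x, v) (x', v')) V_lin.
- exists 1 => p; rewrite Rmult_1_l /vnorm ip_dilation_sum proj13_dilation_sum ip_prod3.
  by rewrite (isometry_ip U_adj UsU) (isometry_ip V_adj VsV) /=; right.
- exists (dilation_sum Us Vs); split; [|split].
  + move=> p q.
    by rewrite ip_dilation_sum [RHS]ip_prod3 proj13_dilation_sum U_adj V_adj.
  + move=> p; rewrite {1}/dilation_sum proj13_dilation_sum UUs /= VVs.
    by case: p => [[]].
  + move=> p; rewrite {1}/dilation_sum proj13_dilation_sum UsU /= VsV.
    by case: p => [[]].
Qed.

Hypotheses (hX : ip_axioms X) (hY : ip_axioms Y) (hZ : ip_axioms Z).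

(* The quadratic form of [dilation_sum U V] is the sum of those of [U] and [V]. *)
Lemma numrange_dilation_sum_le {U V} {a b r : R} :
  unitary U -> unitary V ->
  (forall z, numrange U z -> a * fst z + b * snd z < r) ->
  (forall z, numrange V z -> a * fst z + b * snd z < r) ->
  forall z, numrange (dilation_sum U V) z -> a * fst z + b * snd z <= r.
Proof.
move=> [[U_lin _] [Us [U_adj _]]] [[V_lin _] [Vs [V_adj _]]] U_W V_W z [p [p_unit ->]].
have hXZ := prodIPS_ip_axioms hX hZ.
have := vnorm1_ip (prodIPS_ip_axioms (prodIPS_ip_axioms hX hY) hZ) _ p_unit.
have U_le := numrange_half_plane_quad hXZ U_lin U_adj U_W (proj13 p).
have V_le := numrange_half_plane_quad hY V_lin V_adj V_W p.1.2.
rewrite ip_prod3 ip_dilation_sum; move: U_le V_le; cunfold; cbn [fst snd].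
move=> U_le V_le p_norm.
have -> : r = r * fst (ip (proj13 p) (proj13 p)) + r * fst (ip p.1.2 p.1.2)
  by rewrite -Rmult_plus_distr_l p_norm Rmult_1_r.
lra.
Qed.

End DilationSum.

Lemma dilation_sum_unitary_dilation {X Y : IPS} N (T : X -> X) (V : Y -> Y)
    (U : prodIPS X (CN N) -> prodIPS X (CN N)) :
  unitary_dilation N T U -> unitary V -> unitary_dilation N (opsum T V) (dilation_sum U V).
Proof.
move=> [U_unit U_dil] V_unit; split; first exact: dilation_sum_unitary.
by move=> [x y]; rewrite /dilation_sum /proj13 /= U_dil.
Qed.

Theorem lemma6p1 (H H' : IPS) (hH : is_hilbert H) (hH' : is_hilbert H')
  (N : nat) (T Ts : H -> H) (V : H' -> H')
  (hT : contraction T) (hTs : is_adjoint T Ts)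
  (hDT : defect_dim T Ts N) (hDTs : defect_dim Ts T N)
  (hV : unitary V)
  (hwrap : wraps (unitary_dilation N T)
                 (fun U => Cclosure (numrange U))
                 (Cclosure (numrange T))) :
  wraps (unitary_dilation N (opsum T V))
        (fun U => Cclosure (numrange U))
        (Cclosure (numrange (opsum T V))).
Proof.
move=> a b c ab_neq0 T1_cl.
have hH0 := hilbert_ip_axioms hH; have hH'0 := hilbert_ip_axioms hH'.
have T1_bounded := numrange_contraction_bounded (prodIPS_ip_axioms hH0 hH'0)
  (opsum_Re_ip_le (contraction_Re_ip_le hH0 hT)
                  (contraction_Re_ip_le hH'0 (unitary_contraction hV))).
have [m [m_gt0 T1_margin]] := half_plane_margin ab_neq0 T1_bounded T1_cl.
set c' := c - m / 2.
have T_cl z : Cclosure (numrange T) z -> half_plane a b c' z.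
  move=> z_cl; have := Cclosure_le (fun w Tw => T1_margin w (numrange_opsum_l hH'0 Tw)) z_cl.
  rewrite /half_plane /Cre /Cim /c'; lra.
have [U [U_dil U_cl]] := hwrap a b c' ab_neq0 T_cl.
have U_W z : numrange U z -> a * fst z + b * snd z < c' := fun Uz => U_cl z (Cclosure_self Uz).
have V_W z : numrange V z -> a * fst z + b * snd z < c'.
  by move=> Vz; have := T1_margin z (numrange_opsum_r hH0 Vz); rewrite /c'; lra.
exists (dilation_sum U V); split; first exact: dilation_sum_unitary_dilation.
move=> z z_cl; have := Cclosure_le (numrange_dilation_sum_le hH0 hH'0 (CN_ip_axioms N)
  (proj1 U_dil) hV U_W V_W) z_cl.
rewrite /half_plane /Cre /Cim /c'; lra.
Qed.
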